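(* Let $T:\mathcal{X}\to\mathcal{X}$, $\mathcal{X}\subseteq\mathbb{R}^n$, and data points $x_1,\dots,x_N$ with $x_i^+=T(x_i)$. Let $\Psi=[\psi_1,\dots,\psi_s]$ be a dictionary of real-valued observables spanning $\mathcal{S}$, and let $A=\Psi(X)\in\mathbb{R}^{N\times s}$ and $B=\Psi(X^+)\in\mathbb{R}^{N\times s}$ (rows $\Psi(x_i)$, $\Psi(x_i^+)$) have full column rank. Define the forward and backward EDMD matrices $K_f=A^\dagger B$, $K_b=B^\dagger A$ and the consistency matrix $M_c=I-K_fK_b\in\mathbb{R}^{s\times s}$. Let $\theta_1,\dots,\theta_s$ be the principal angles between $\mathcal{R}(A)$ and $\mathcal{R}(B)$ in $\mathbb{R}^N$ (equivalently, between $\mathcal{S}$ and $\mathcal{K}\mathcal{S}=\mathrm{span}\{\psi_j\circ T\}$ with the empirical inner product $\langle f,g\rangle=\frac1N\sum_i f(x_i)g(x_i)$). Then: (1) the eigenvalues $\lambda_1,\dots,\lambda_s$ of $M_c$ (with multiplicity) are $\lambda_i=\sin^2\theta_i$, $i=1,\dots,s$; (2) $M_c$ has eigenvectors $v_1,\dots,v_s$ with $M_cv_i=\sin^2\theta_i\,v_i$ such that $Av_i$ is the $i$-th principal vector of $\mathcal{R}(A)$ (with respect to $\mathcal{R}(B)$); correspondingly the function $u_i^{\mathcal{S}}(\cdot)=\Psi(\cdot)v_i$ is the $i$-th principal vector of $\mathcal{S}$ with respect to $\mathcal{K}\mathcal{S}$, for all $i=1,\dots,s$.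
   Context: $M^\dagger$ denotes the Moore–Penrose pseudoinverse and $\mathcal{R}(M)$ the column space. Principal angles and vectors: for subspaces $\mathcal{U},\mathcal{V}$ of an inner product space with $\dim\mathcal{U}=d_1$, $\dim\mathcal{V}=d_2$, $k=\min\{d_1,d_2\}$, the principal angles $0\le\theta_1\le\dots\le\theta_k\le\pi/2$ are defined recursively by $\cos\theta_j=\max|\langle u,v\rangle|$ over unit $u\in\mathcal{U}$, $v\in\mathcal{V}$ orthogonal to the previously chosen $u_1,\dots,u_{j-1}$ and $v_1,\dots,v_{j-1}$ respectively; the maximizers $(u_j,v_j)$ are the $j$-th pair of principal vectors. Observables are identified with their value vectors on the data points $x_1,\dots,x_N$ (unit normalization understood up to the constant factor from the empirical measure). *)

From HB Require Import structures.
From mathcomp Require Import all_boot all_order all_algebra.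
From mathcomp Require Import all_classical all_reals all_analysis.
Set Implicit Arguments. Unset Strict Implicit. Unset Printing Implicit Defensive.
Import Order.TTheory GRing.Theory Num.Theory.
Local Open Scope ring_scope.

Definition dotv (R : realType) (N : nat) (x y : 'cV[R]_N) : R := (x^T *m y) 0 0.

Definition in_colspace (R : realType) (N d : nat) (M : 'M[R]_(N, d)) (x : 'cV[R]_N) :=
  exists c : 'cV[R]_d, x = M *m c.

Definition is_MP_pinv (R : realType) (m n : nat) (M : 'M[R]_(m, n)) (X : 'M[R]_(n, m)) :=
  [/\ M *m X *m M = M, X *m M *m X = X,
      (M *m X)^T = M *m X & (X *m M)^T = X *m M].

(* (u j, w j), j < k, are the successive pairs of principal vectors of
   U = R(A) and V = R(B) (recursive definition: unit vectors, orthogonal to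
   the previously chosen ones, maximizing |<u,w>| among all such). *)
Definition principal_vectors (R : realType) (N d1 d2 k : nat)
    (A : 'M[R]_(N, d1)) (B : 'M[R]_(N, d2)) (u w : 'I_k -> 'cV[R]_N) : Prop :=
  forall j : 'I_k,
    [/\ in_colspace A (u j) /\ in_colspace B (w j),
        dotv (u j) (u j) = 1, dotv (w j) (w j) = 1,
        (forall i : 'I_k, (i < j)%N -> dotv (u i) (u j) = 0 /\ dotv (w i) (w j) = 0) &
        (forall x y : 'cV[R]_N,
            in_colspace A x -> in_colspace B y ->
            dotv x x = 1 -> dotv y y = 1 ->
            (forall i : 'I_k, (i < j)%N -> dotv (u i) x = 0 /\ dotv (w i) y = 0) ->
            `|dotv x y| <= `|dotv (u j) (w j)|)].

Definition principal_angle (R : realType) (N k : nat) (u w : 'I_k -> 'cV[R]_N) (j : 'I_k) : R :=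
  acos `|dotv (u j) (w j)|.

Definition data_matrix (R : realType) (n N s : nat)
    (psi : 'I_s -> 'rV[R]_n -> R) (x : 'I_N -> 'rV[R]_n) : 'M[R]_(N, s) :=
  \matrix_(i < N, j < s) psi j (x i).

(* With P = A Ad and Q = B Bd the orthogonal projections onto R(A) and R(B),
   and c_j = <u_j, w_j> (so |c_j| = cos theta_j), the maximality of each pair of
   principal vectors and the equality case of Cauchy-Schwarz give
   Q u_j = c_j w_j and P w_j = c_j u_j.  Hence v_j = Ad u_j satisfies
   M_c v_j = v_j - Ad Q P u_j = (1 - c_j^2) v_j, and as A v_j = u_j are
   orthonormal the v_j form a basis: M_c is similar to diag(sin^2 theta_j).
   Principal vectors exist since each greedy maximization is over a compact set. *)

From HB Require Import structures.
From mathcomp Require Import all_boot all_order all_algebra.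
From mathcomp Require Import all_classical all_reals all_analysis.
Import Order.TTheory GRing.Theory Num.Theory.
Local Open Scope ring_scope.

Section InnerProduct.
Context {R : realType} {N : nat}.
Implicit Types (x y z : 'cV[R]_N) (a : R).

Lemma dotvE x y : dotv x y = \sum_k x k 0 * y k 0.
Proof. by rewrite /dotv mxE; apply: eq_bigr => k _; rewrite mxE. Qed.

Lemma dotvC x y : dotv x y = dotv y x.
Proof. by rewrite !dotvE; apply: eq_bigr => k _; exact: mulrC. Qed.

Lemma dotvDl x y z : dotv (x + y) z = dotv x z + dotv y z.
Proof. by rewrite !dotvE -big_split; apply: eq_bigr => k _; rewrite mxE mulrDl. Qed.

Lemma dotvZl a x y : dotv (a *: x) y = a * dotv x y.
Proof. by rewrite !dotvE mulr_sumr; apply: eq_bigr => k _; rewrite mxE mulrA. Qed.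

Lemma dotvBl x y z : dotv (x - y) z = dotv x z - dotv y z.
Proof. by rewrite dotvDl -scaleN1r dotvZl mulN1r. Qed.

Lemma dotvZr a x y : dotv x (a *: y) = a * dotv x y.
Proof. by rewrite dotvC dotvZl dotvC. Qed.

Lemma dotvBr x y z : dotv x (y - z) = dotv x y - dotv x z.
Proof. by rewrite dotvC dotvBl !(dotvC x). Qed.

Lemma dotv_mulmxl (M : 'M[R]_N) x y : dotv (M *m x) y = dotv x (M^T *m y).
Proof. by rewrite /dotv trmx_mul mulmxA. Qed.

Lemma dotv_mulmx_sym (M : 'M[R]_N) x y : M^T = M -> dotv x (M *m y) = dotv (M *m x) y.
Proof. by move=> MT; rewrite dotv_mulmxl MT. Qed.

Lemma dotv_ge0 x : 0 <= dotv x x.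
Proof. by rewrite dotvE; apply: sumr_ge0 => k _; rewrite -expr2 sqr_ge0. Qed.

Lemma dotv_eq0 x : (dotv x x == 0) = (x == 0).
Proof.
apply/idP/eqP => [|->]; last by rewrite dotvE big1 // => k _; rewrite mxE mul0r.
rewrite dotvE psumr_eq0 => [/allP x0|k _]; last by rewrite -expr2 sqr_ge0.
apply/matrixP => k l; rewrite (ord1 l) mxE.
by apply/eqP; rewrite -sqrf_eq0 expr2; apply: x0; rewrite mem_index_enum.
Qed.

Definition normalize x := (Num.sqrt (dotv x x))^-1 *: x.

Lemma dotv_normalize x : x != 0 -> dotv (normalize x) (normalize x) = 1.
Proof.
rewrite -dotv_eq0 => x0; have x_gt0 : 0 < dotv x x by rewrite lt_def x0 dotv_ge0.
rewrite dotvZl dotvZr mulrA -expr2 exprVn sqr_sqrtr ?ltW //.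
by rewrite mulVf // gt_eqF.
Qed.

Lemma normr_dotv_le1 x y : dotv x x = 1 -> dotv y y = 1 -> `|dotv x y| <= 1.
Proof.
move=> xx yy; have := dotv_ge0 (x - dotv x y *: y).
rewrite !(dotvBl, dotvBr, dotvZl, dotvZr) xx yy (dotvC y x).
rewrite mulr1 subrr mulr0 subr0 subr_ge0 -expr2 -real_normK ?num_real //.
by rewrite -[leRHS](expr1n _ 2) ler_pXn2r ?nnegrE.
Qed.

Lemma normr_coord_le1 x k : dotv x x = 1 -> `|x k 0| <= 1.
Proof.
move=> xx; rewrite -(ler_pXn2r (n := 2)) ?nnegrE // expr1n real_normK ?num_real //.
rewrite -xx dotvE (bigD1 k) //= expr2 lerDl.
by apply: sumr_ge0 => i _; rewrite -expr2 sqr_ge0.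
Qed.

End InnerProduct.

Section OrthogonalProjection.
Context {R : realType} {N : nat} {Q : 'M[R]_N}.
Hypotheses (QT : Q^T = Q) (QQ : Q *m Q = Q).

Lemma dotv_proj a : dotv (Q *m a) (Q *m a) = dotv a (Q *m a).
Proof. by rewrite dotv_mulmxl QT mulmxA QQ. Qed.

(* Equality case of Cauchy-Schwarz: maximality of z gives |Q a| <= |<a, z>|,
   while |<a, z>| = |<Q a, z>| <= |Q a|. *)
Lemma proj_eq_scale_maximizer a z : Q *m z = z -> dotv z z = 1 ->
  (Q *m a != 0 -> `|dotv a (normalize (Q *m a))| <= `|dotv a z|) ->
  Q *m a = dotv a z *: z.
Proof.
move=> Qz zz z_max; set p := Q *m a; set c := dotv a z.
have cE : c = dotv p z by rewrite /p dotv_mulmxl QT Qz.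
have pp_le : dotv p p <= c ^+ 2.
  have [/eqP|p0] := eqVneq p 0; first by rewrite -dotv_eq0 => /eqP ->; rewrite sqr_ge0.
  have pp_gt0 : 0 < dotv p p by rewrite lt_def dotv_eq0 p0 dotv_ge0.
  have := z_max p0; rewrite /normalize dotvZr -dotv_proj -{2}(sqr_sqrtr (ltW pp_gt0)).
  rewrite expr2 mulKf ?sqrtr_eq0 -?ltNge // ger0_norm ?sqrtr_ge0 // => le_c.
  rewrite -(sqr_sqrtr (ltW pp_gt0)) -[c ^+ 2]real_normK ?num_real //.
  by rewrite ler_pXn2r ?nnegrE ?sqrtr_ge0.
apply/eqP; rewrite -subr_eq0 -dotv_eq0 eq_le dotv_ge0 andbT.
rewrite !(dotvBl, dotvBr, dotvZl, dotvZr) zz -cE (dotvC z p) -cE.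
by rewrite mulr1 subrr mulr0 subr0 subr_le0 -expr2.
Qed.

End OrthogonalProjection.

Section PseudoInverse.
Context {R : realType} {N d : nat} {A : 'M[R]_(N, d)} {Ad : 'M[R]_(d, N)}.
Hypothesis mpA : is_MP_pinv A Ad.

Lemma pinv_colspaceP x : in_colspace A x <-> A *m Ad *m x = x.
Proof.
case: mpA => AAdA _ _ _; split => [[c ->]|<-]; first by rewrite !mulmxA AAdA.
by exists (Ad *m x); rewrite mulmxA.
Qed.

Lemma pinv_colspace_dotvP x :
  in_colspace A x <-> dotv ((A *m Ad - 1%:M) *m x) ((A *m Ad - 1%:M) *m x) = 0.
Proof.
rewrite pinv_colspaceP mulmxBl mul1mx.
split => [->|/eqP]; first by rewrite subrr; apply/eqP; rewrite dotv_eq0.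
by rewrite dotv_eq0 subr_eq0 => /eqP.
Qed.

Lemma pinv_proj_tr : (A *m Ad)^T = A *m Ad.
Proof. by case: mpA. Qed.

Lemma pinv_proj_idem : A *m Ad *m (A *m Ad) = A *m Ad.
Proof. by case: mpA => AAdA _ _ _; rewrite mulmxA AAdA. Qed.

Lemma pinv_mul_proj : Ad *m (A *m Ad) = Ad.
Proof. by case: mpA => _ AdAAd _ _; rewrite mulmxA AdAAd. Qed.

End PseudoInverse.

Lemma char_poly_similar {F : fieldType} {n : nat} {M D V : 'M[F]_n} :
  V \in unitmx -> M *m V = V *m D -> char_poly M = char_poly D.
Proof.
move=> Vu MV.
have : char_poly_mx M *m map_mx polyC V = map_mx polyC V *m char_poly_mx D.
  by rewrite /char_poly_mx mulmxBl mulmxBr -!map_mxM MV scalar_mxC.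
move/(congr1 determinant); rewrite !det_mulmx det_map_mx [RHS]mulrC.
by apply: mulIf; rewrite polyC_eq0 -unitfE -unitmxE.
Qed.

Definition colsmx {R : Type} {N k : nat} (u : 'I_k -> 'cV[R]_N) : 'M[R]_(N, k) :=
  \matrix_(r, i) u i r 0.

Section ColumnMatrix.
Context {R : comNzRingType} {N k : nat}.

Lemma mulmx_colsmx m (M : 'M[R]_(m, N)) (u : 'I_k -> 'cV[R]_N) :
  M *m colsmx u = colsmx (fun i => M *m u i).
Proof. by apply/matrixP => r i; rewrite !mxE; apply: eq_bigr => l _; rewrite !mxE. Qed.

Lemma colsmx_scale (d : 'I_k -> R) (u : 'I_k -> 'cV[R]_N) :
  colsmx (fun i => d i *: u i) = colsmx u *m diag_mx (\row_i d i).
Proof. by apply/matrixP => r i; rewrite mul_mx_diag !mxE mulrC. Qed.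

End ColumnMatrix.

Section PrincipalVectors.
Context {R : realType} {N d1 d2 k : nat} {A : 'M[R]_(N, d1)} {B : 'M[R]_(N, d2)}.
Context {Ad : 'M[R]_(d1, N)} {Bd : 'M[R]_(d2, N)} {u w : 'I_k -> 'cV[R]_N}.
Hypotheses (mpA : is_MP_pinv A Ad) (mpB : is_MP_pinv B Bd).
Hypothesis pv : principal_vectors A B u w.

Lemma principal_vectors_sym : principal_vectors B A w u.
Proof.
move=> j; have [[uA wB] uu ww orth u_max] := pv j; split => //.
  by move=> i /orth [].
move=> x y xB yA xx yy xy_orth; rewrite dotvC (dotvC (w j)).
by apply: u_max => // i /xy_orth [].
Qed.

Lemma principal_vector_proj j : A *m Ad *m u j = u j.
Proof. by have [[/(pinv_colspaceP mpA) ? _] _ _ _ _] := pv j. Qed.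

Lemma principal_vectors_orthonormal i j : dotv (u i) (u j) = (i == j)%:R.
Proof.
have [ij|ji|/val_inj ->] := ltngtP i j; last by rewrite eqxx; case: (pv j).
- by rewrite -val_eqE /= (ltn_eqF ij); case: (pv j) => _ _ _ /(_ i ij) [].
- by rewrite -val_eqE /= eq_sym (ltn_eqF ji) dotvC; case: (pv i) => _ _ _ /(_ j ji) [].
Qed.

(* The hypothesis makes B Bd u_j orthogonal to the earlier w_i, so its
   direction competes in the j-th maximization. *)
Lemma proj_principal_vector_step (j : 'I_k) :
  (forall i : 'I_k, (i < j)%N -> A *m Ad *m w i = dotv (u i) (w i) *: u i) ->
  B *m Bd *m u j = dotv (u j) (w j) *: w j.
Proof.
move=> Pw; have [[uA _] uu ww orth u_max] := pv j.
have Qw i : B *m Bd *m w i = w i by have [[_ /(pinv_colspaceP mpB) ?] _ _ _ _] := pv i.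
apply: (proj_eq_scale_maximizer (pinv_proj_tr mpB) (pinv_proj_idem mpB) _ _ (Qw j) ww).
move=> Qu0; apply: u_max => //.
- by apply/(pinv_colspaceP mpB); rewrite /normalize -scalemxAr mulmxA pinv_proj_idem.
- exact: dotv_normalize.
move=> i ij; split; first exact: (orth i ij).1.
rewrite /normalize dotvZr; suff -> : dotv (w i) (B *m Bd *m u j) = 0 by rewrite mulr0.
rewrite dotv_mulmx_sym ?(pinv_proj_tr mpB) // Qw -principal_vector_proj.
by rewrite dotv_mulmx_sym ?(pinv_proj_tr mpA) // Pw // dotvZl (orth i ij).1 mulr0.
Qed.

End PrincipalVectors.

Section ConsistencyMatrix.
Context {R : realType} {N d1 d2 k : nat} {A : 'M[R]_(N, d1)} {B : 'M[R]_(N, d2)}.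
Context {Ad : 'M[R]_(d1, N)} {Bd : 'M[R]_(d2, N)} {u w : 'I_k -> 'cV[R]_N}.
Hypotheses (mpA : is_MP_pinv A Ad) (mpB : is_MP_pinv B Bd).
Hypothesis pv : principal_vectors A B u w.

Lemma proj_principal_vectors j :
  B *m Bd *m u j = dotv (u j) (w j) *: w j /\ A *m Ad *m w j = dotv (u j) (w j) *: u j.
Proof.
case: j => j jk; elim/ltn_ind: j jk => j IH jk.
have IHj (i : 'I_k) : (i < j)%N -> _ := let: Ordinal i ik := i in fun ij => IH i ij ik.
split; first by apply: proj_principal_vector_step mpA mpB pv _ _ => i /IHj [].
rewrite dotvC; apply: (proj_principal_vector_step mpB mpA (principal_vectors_sym pv)).
by move=> i /IHj [Qu _]; rewrite dotvC.
Qed.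

Lemma consistency_principal_eigen j :
  (1%:M - Ad *m B *m (Bd *m A)) *m (Ad *m u j) = (1 - dotv (u j) (w j) ^+ 2) *: (Ad *m u j).
Proof.
have [Qu Pw] := proj_principal_vectors j.
rewrite mulmxBl mul1mx scalerBl scale1r; congr (_ - _).
have -> : Ad *m B *m (Bd *m A) *m (Ad *m u j) = Ad *m (B *m Bd *m (A *m Ad *m u j)).
  by rewrite !mulmxA.
rewrite (principal_vector_proj mpA pv) Qu -scalemxAr -{1}(pinv_mul_proj mpA).
by rewrite -mulmxA Pw -scalemxAr scalerA -expr2.
Qed.

Lemma sin_principal_angle j :
  sin (principal_angle u w j) ^+ 2 = 1 - dotv (u j) (w j) ^+ 2.
Proof.
have [_ uu ww _ _] := pv j; have c_le1 := normr_dotv_le1 _ _ uu ww.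
rewrite sin2cos2 acosK ?real_normK ?num_real // in_itv /= c_le1 andbT.
by rewrite (le_trans _ (normr_ge0 _)) // lerN10.
Qed.

End ConsistencyMatrix.

Lemma char_poly_consistency {R : realType} {N s d2 : nat} {A : 'M[R]_(N, s)}
    {B : 'M[R]_(N, d2)} {Ad : 'M[R]_(s, N)} {Bd : 'M[R]_(d2, N)} {u w : 'I_s -> 'cV[R]_N} :
  is_MP_pinv A Ad -> is_MP_pinv B Bd -> principal_vectors A B u w ->
  char_poly (1%:M - Ad *m B *m (Bd *m A)) =
    \prod_(i < s) ('X - (sin (principal_angle u w i) ^+ 2)%:P).
Proof.
move=> mpA mpB pv; set V := colsmx (fun i => Ad *m u i).
have AV : A *m V = colsmx u.
  rewrite mulmx_colsmx; congr colsmx; apply: funext => i.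
  by rewrite mulmxA (principal_vector_proj mpA pv).
have gram : (colsmx u)^T *m colsmx u = 1%:M.
  apply/matrixP => i j; rewrite [RHS]mxE -(principal_vectors_orthonormal pv) dotvE mxE.
  by apply: eq_bigr => l _; rewrite !mxE.
have [_ Vunit] : (colsmx u)^T *m A \in unitmx /\ V \in unitmx.
  by apply: mulmx1_unit; rewrite -mulmxA AV gram.
have MV : (1%:M - Ad *m B *m (Bd *m A)) *m V =
    V *m diag_mx (\row_i (1 - dotv (u i) (w i) ^+ 2)).
  rewrite mulmx_colsmx -colsmx_scale; congr colsmx; apply: funext => i.
  exact: consistency_principal_eigen.
rewrite (char_poly_similar Vunit MV) char_poly_trig ?diag_mx_is_trig //.
by apply: eq_bigr => i _; rewrite !mxE eqxx mulr1n (sin_principal_angle pv).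
Qed.

(* The constraints of the j-th step of [principal_vectors], for sequences
   indexed by nat so that the greedy construction can extend them. *)
Definition admissible {R : realType} {N d : nat} (A : 'M[R]_(N, d))
    (u : nat -> 'cV[R]_N) (j : nat) (x : 'cV[R]_N) :=
  [/\ in_colspace A x, dotv x x = 1 & forall i, (i < j)%N -> dotv (u i) x = 0].

Lemma admissible_ext {R : realType} {N d : nat} (A : 'M[R]_(N, d))
    (u u' : nat -> 'cV[R]_N) (j : nat) (x : 'cV[R]_N) :
  (forall i, (i < j)%N -> u' i = u i) -> admissible A u' j x <-> admissible A u j x.
Proof.
move=> uu'; split=> -[xA xx orth]; split=> // i ij.
  by rewrite -uu' //; exact: orth.
by rewrite uu' //; exact: orth.
Qed.

(* A nonzero row r with r A^T [u_0 ... u_(j-1)] = 0 exists as j < d, and A r^T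
   is nonzero by full column rank. *)
Lemma exists_unit_orthogonal {R : realType} {N d : nat} (A : 'M[R]_(N, d))
    (u : nat -> 'cV[R]_N) (j : nat) :
  \rank A = d -> (j < d)%N -> exists x, admissible A u j x.
Proof.
move=> rkA jd; pose M := A^T *m colsmx (fun i : 'I_j => u i).
have : ~~ row_free M by rewrite /row_free neq_ltn (leq_ltn_trans (rank_leq_col M) jd).
rewrite -kermx_eq0 => /rowV0Pn [r /sub_kermxP rM r0].
have freeAT : row_free A^T by rewrite /row_free mxrank_tr rkA.
set x0 := A *m r^T.
have x0_neq0 : x0 != 0.
  apply: contraNneq r0 => Ar0; apply/eqP; apply: (row_free_inj freeAT).
  by rewrite /= mul0mx -[r *m A^T]trmxK trmx_mul trmxK -/x0 Ar0 trmx0.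
exists (normalize x0); split; last move=> i ij.
- by exists ((Num.sqrt (dotv x0 x0))^-1 *: r^T); rewrite /normalize scalemxAr.
- exact: dotv_normalize.
rewrite /normalize dotvZr; suff -> : dotv (u i) x0 = 0 by rewrite mulr0.
have : (r *m M) 0 (Ordinal ij) = 0 by rewrite rM mxE.
rewrite /M mulmxA -[r *m A^T]trmxK trmx_mul trmxK -/x0 dotvC /dotv => <-.
by rewrite !mxE; apply: eq_bigr => l _; rewrite !mxE.
Qed.

Section EntrywiseContinuity.
Import numFieldNormedType.Exports.
Context {R : realType} {T : topologicalType}.

Definition entrywise_continuous {N : nat} (g : T -> 'cV[R]_N) :=
  forall k, continuous (fun z => g z k 0).

Lemma continuous_dotv {N : nat} (g h : T -> 'cV[R]_N) :
  entrywise_continuous g -> entrywise_continuous h ->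
  continuous (fun z => dotv (g z) (h z)).
Proof.
move=> gc hc; under eq_fun do rewrite dotvE.
apply: continuous_big => [|k _ z]; first exact: add_continuous.
by apply: continuousM; [exact: gc | exact: hc].
Qed.

Lemma entrywise_continuous_mulmx {m N : nat} (M : 'M[R]_(m, N)) (g : T -> 'cV[R]_N) :
  entrywise_continuous g -> entrywise_continuous (fun z => M *m g z).
Proof.
move=> gc k; under eq_fun do rewrite mxE.
apply: continuous_big => [|l _ z]; first exact: add_continuous.
by apply: continuousM; [exact: cst_continuous | exact: gc].
Qed.

End EntrywiseContinuity.

Section Compactness.
Local Open Scope classical_set_scope.
Import numFieldNormedType.Exports.
Context {R : realType}.

Lemma closed_level {T : topologicalType} (f : T -> R) (c : R) :
  continuous f -> closed [set z | f z = c].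
Proof.
move=> fc; apply: (@preimage_closed _ _ f [set x | x = c]) => [z _|]; first exact: fc.
exact: closed_eq.
Qed.

Lemma closed_admissible {T : topologicalType} {N d : nat} {A : 'M[R]_(N, d)}
    {Ad : 'M[R]_(d, N)} (u : nat -> 'cV[R]_N) (j : nat) (g : T -> 'cV[R]_N) :
  is_MP_pinv A Ad -> entrywise_continuous g -> closed [set z | admissible A u j (g z)].
Proof.
move=> mpA gc; pose r z := (A *m Ad - 1%:M) *m g z.
have -> : [set z | admissible A u j (g z)] =
    [set z | dotv (r z) (r z) = 0] `&` [set z | dotv (g z) (g z) = 1] `&`
    \bigcap_(i in [set i | (i < j)%N]) [set z | dotv (u i) (g z) = 0].
  apply/seteqP; split=> z /=.
    by case=> /(pinv_colspace_dotvP mpA) ? ? orth; split.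
  by case=> [[/(pinv_colspace_dotvP mpA) ? ?] orth]; split.
have rc : entrywise_continuous r by exact: entrywise_continuous_mulmx.
apply: closedI; first apply: closedI; try apply: closed_level.
- exact: continuous_dotv.
- exact: continuous_dotv.
apply: closed_bigI => i _; apply: closed_level.
by apply: continuous_dotv => // k; exact: cst_continuous.
Qed.

Lemma normr_mx_le1 {m n : nat} (z : 'M[R]_(m, n)) :
  (forall i k, `|z i k| <= 1) -> `|z| <= 1.
Proof.
by move=> z_le1; rewrite [leLHS]/Num.norm /= mx_normrE; apply: bigmax_le => // -[i k] _.
Qed.

End Compactness.

Definition maximal_pair {R : realType} {N d1 d2 : nat} (A : 'M[R]_(N, d1))
    (B : 'M[R]_(N, d2)) (u w : nat -> 'cV[R]_N) (j : nat) (x y : 'cV[R]_N) :=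
  [/\ admissible A u j x, admissible B w j y &
      forall x' y', admissible A u j x' -> admissible B w j y' ->
        `|dotv x' y'| <= `|dotv x y|].

Section ExistencePrincipalVectors.
Local Open Scope classical_set_scope.
Import numFieldNormedType.Exports.
Context {R : realType} {N d1 d2 : nat} {A : 'M[R]_(N, d1)} {B : 'M[R]_(N, d2)}.
Context {Ad : 'M[R]_(d1, N)} {Bd : 'M[R]_(d2, N)}.
Hypotheses (mpA : is_MP_pinv A Ad) (mpB : is_MP_pinv B Bd).
Hypotheses (rkA : \rank A = d1) (rkB : \rank B = d2).

(* A pair (x, y) is encoded as the row vector (x^T, y^T) of 'rV_(N + N), the
   setting of the Heine-Borel theorem [bounded_closed_compact]. *)
Lemma exists_maximal_pair (u w : nat -> 'cV[R]_N) (j : nat) :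
  (j < d1)%N -> (j < d2)%N -> exists x y, maximal_pair A B u w j x y.
Proof.
move=> jd1 jd2; pose xz (z : 'rV[R]_(N + N)) := (lsubmx z)^T.
pose yz (z : 'rV[R]_(N + N)) := (rsubmx z)^T.
have xzK x y : xz (row_mx x^T y^T) = x by rewrite /xz row_mxKl trmxK.
have yzK x y : yz (row_mx x^T y^T) = y by rewrite /yz row_mxKr trmxK.
have xzc : entrywise_continuous xz.
  by move=> k; under eq_fun do rewrite !mxE; exact: coord_continuous.
have yzc : entrywise_continuous yz.
  by move=> k; under eq_fun do rewrite !mxE; exact: coord_continuous.
pose K := [set z | admissible A u j (xz z)] `&` [set z | admissible B w j (yz z)].
have K_closed : closed K.
  by apply: closedI; [exact: closed_admissible mpA xzc | exact: closed_admissible mpB yzc].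
have K_le1 z : K z -> `|z| <= 1.
  case=> -[_ xx _] [_ yy _]; apply: normr_mx_le1 => i l; rewrite (ord1 i).
  case: (splitP l) => k lk.
    rewrite (_ : l = lshift N k); last exact: val_inj.
    by have := normr_coord_le1 _ k xx; rewrite /xz !mxE.
  rewrite (_ : l = rshift N k); last exact: val_inj.
  by have := normr_coord_le1 _ k yy; rewrite /yz !mxE.
have K_bounded : bounded_set K.
  rewrite /bounded_set /= /bounded_near; near=> M => z /K_le1 z_le1.
  by apply: le_trans z_le1 _; near: M; apply: nbhs_pinfty_ge; rewrite num_real.
have K_nonempty : K !=set0.
  have [x0 x0_adm] := exists_unit_orthogonal _ u _ rkA jd1.
  have [y0 y0_adm] := exists_unit_orthogonal _ w _ rkB jd2.
  by exists (row_mx x0^T y0^T); rewrite /K /= xzK yzK.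
have fc : continuous (fun z => `|dotv (xz z) (yz z)|).
  move=> z; apply: (continuous_comp (f := fun z => dotv (xz z) (yz z))).
    exact: continuous_dotv.
  exact: norm_continuous.
have [c] := compact_EVT_max K_nonempty (bounded_closed_compact K_bounded K_closed)
  (continuous_subspaceT fc).
rewrite inE => -[xc yc] c_max; exists (xz c), (yz c); split => // x y xa ya.
have := c_max (row_mx x^T y^T); rewrite xzK yzK; apply.
by rewrite inE; split; rewrite /= ?xzK ?yzK.
Unshelve. all: by end_near.
Qed.

Lemma maximal_pair_ext (u w u' w' : nat -> 'cV[R]_N) (j : nat) x y :
  (forall i, (i < j)%N -> u' i = u i /\ w' i = w i) ->
  maximal_pair A B u w j x y -> maximal_pair A B u' w' j x y.
Proof.
move=> uw_eq.
have adm_u z := admissible_ext A u u' j z (fun i ij => (uw_eq i ij).1).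
have adm_w z := admissible_ext B w w' j z (fun i ij => (uw_eq i ij).2).
case=> /adm_u xa /adm_w ya xy_max; split => // x' y' /adm_u xa' /adm_w ya'.
exact: xy_max.
Qed.

Lemma exists_greedy_pairs (m : nat) : (m <= d1)%N -> (m <= d2)%N ->
  exists u w : nat -> 'cV[R]_N, forall j, (j < m)%N -> maximal_pair A B u w j (u j) (w j).
Proof.
elim: m => [|m IH] md1 md2; first by exists (fun=> 0), (fun=> 0).
have [u [w uw_max]] := IH (ltnW md1) (ltnW md2).
have [x [y xy_max]] := exists_maximal_pair u w m md1 md2.
pose u' i := if i == m then x else u i; pose w' i := if i == m then y else w i.
have uw'_eq j : (j < m)%N -> forall i, (i < j)%N -> u' i = u i /\ w' i = w i.
  by move=> jm i ij; rewrite /u' /w' ltn_eqF // (ltn_trans ij jm).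
exists u', w' => j; rewrite ltnS leq_eqVlt => /predU1P [->|jm].
  rewrite /u' /w' !eqxx; apply: maximal_pair_ext xy_max => i im.
  by rewrite ltn_eqF.
rewrite /u' /w' ltn_eqF //; apply: maximal_pair_ext (uw_max j jm); exact: uw'_eq.
Qed.

Lemma exists_principal_vectors (k : nat) : (k <= d1)%N -> (k <= d2)%N ->
  exists u w : 'I_k -> 'cV[R]_N, principal_vectors A B u w.
Proof.
move=> kd1 kd2; have [u [w uw_max]] := exists_greedy_pairs k kd1 kd2.
exists (fun i => u i), (fun i => w i) => j.
have [[uA uu u_orth] [wB ww w_orth] uw_max_j] := uw_max j (ltn_ord j).
split => // [i ij|x y xA yB xx yy xy_orth]; first by split; [exact: u_orth | exact: w_orth].
by apply: uw_max_j; split => // i ij; case: (xy_orth (Ordinal (ltn_trans ij (ltn_ord j))) ij).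
Qed.

End ExistencePrincipalVectors.

Theorem lemma1 (R : realType) (n N s : nat)
  (Xdom : 'rV[R]_n -> Prop) (T : 'rV[R]_n -> 'rV[R]_n)
  (hT : forall y, Xdom y -> Xdom (T y))
  (x : 'I_N -> 'rV[R]_n) (hx : forall i, Xdom (x i))
  (psi : 'I_s -> 'rV[R]_n -> R)
  (Ad Bd : 'M[R]_(s, N)) :
  let A := data_matrix psi x in
  let B := data_matrix psi (fun i => T (x i)) in
  \rank A = s -> \rank B = s ->
  is_MP_pinv A Ad -> is_MP_pinv B Bd ->
  let Kf := Ad *m B in
  let Kb := Bd *m A in
  let Mc := 1%:M - Kf *m Kb in
  (* (1) the eigenvalues of Mc, with multiplicity, are sin^2 theta_i *)
  (forall u w : 'I_s -> 'cV[R]_N, principal_vectors A B u w ->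
     char_poly Mc = \prod_(i < s) ('X - (sin (principal_angle u w i) ^+ 2)%:P))
  /\
  (* (2) eigenvectors v_i with A v_i the i-th principal vector of R(A) *)
  (exists (v : 'I_s -> 'cV[R]_s) (w : 'I_s -> 'cV[R]_N),
     principal_vectors A B (fun i => A *m v i) w /\
     forall i : 'I_s,
       Mc *m v i = sin (principal_angle (fun i => A *m v i) w i) ^+ 2 *: v i).
Proof.
move=> A B rkA rkB mpA mpB Kf Kb Mc; split=> [u w pv|].
  exact: char_poly_consistency mpA mpB pv.
have [u [w pv]] := exists_principal_vectors mpA mpB rkA rkB s (leqnn s) (leqnn s).
exists (fun i => Ad *m u i), w.
have -> : (fun i => A *m (Ad *m u i)) = u.
  by apply: funext => i; rewrite mulmxA (principal_vector_proj mpA pv).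
split=> // i.
by rewrite (sin_principal_angle pv); exact: consistency_principal_eigen.
Qed.
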